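(* Let $n\ge2$ be an integer, and let $\mathcal S$ be the smallest collection of $(n+1)$-element sets of non-negative integers such that: (i) $\{j,j+1,\dots,j+n\}\in\mathcal S$ for each $j=0,1,\dots,n-2$; (ii) if $S\in\mathcal S$ then $2S:=\{2s: s\in S\}\in\mathcal S$; (iii) if $S,T\in\mathcal S$ satisfy $|S\cap T|=n$, then for each $a\in S\cap T$ the set $(S\cup T)\setminus\{a\}$ belongs to $\mathcal S$. Then $\{0,1,2,4,8,\dots,2^{n-1}\}\in\mathcal S$. *)

From mathcomp Require Import all_boot.
From mathcomp Require Import finmap.
Set Implicit Arguments. Unset Strict Implicit. Unset Printing Implicit Defensive.
Local Open Scope fset_scope.

Inductive inS (n : nat) : {fset nat} -> Prop :=
| inS_base (j : nat) :
    (j <= n - 2)%N -> inS n [fset (j + i)%N | i in iota 0 n.+1]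
| inS_dbl (S : {fset nat}) :
    inS n S -> inS n [fset (2 * s)%N | s in S]
| inS_glue (S T : {fset nat}) (a : nat) :
    inS n S -> inS n T -> #|` S `&` T| = n -> a \in S `&` T ->
    inS n ((S `|` T) `\ a).

Definition powset (n : nat) : {fset nat} :=
  [fset 0%N] `|` [fset (2 ^ k)%N | k in iota 0 n].

From mathcomp Require Import all_boot.
From mathcomp Require Import finmap.
From mathcomp Require Import zify.
Set Implicit Arguments. Unset Strict Implicit. Unset Printing Implicit Defensive.
Local Open Scope fset_scope.

(* Call a finite set W saturated when all its (n+1)-subsets lie in S_n.
   Gluing (rule (iii)) c |` D and y |` (c |` D \ d) along c |` D \ d trades
   one element of an n-set D at a time; so if W is saturated, y is new and
   y |` C lies in S_n for one n-subset C of W, then y |` W is saturated.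
   Adding points one at a time, two saturated sets sharing n points have a
   saturated union, and doubling (rule (ii)) preserves saturation.  The base
   intervals glue to a saturated [0, 2n-1); its copies scaled by 2^k,
   k <= n-2, glue along the sets 2^(k+1) [0, n), and their union contains
   0, 1, 2, ..., 2^(n-1). *)

Section Saturation.

Variable n : nat.

Definition saturated (W : {fset nat}) :=
  forall S, S `<=` W -> #|` S| = n.+1 -> inS n S.

Lemma saturated_sub (W W' : {fset nat}) :
  W' `<=` W -> saturated W -> saturated W'.
Proof. by move=> sW'W satW S sSW' cS; apply: satW (fsubset_trans sSW' sW'W) cS. Qed.

Lemma saturated_inS (A : {fset nat}) : inS n A -> #|` A| = n.+1 -> saturated A.
Proof.
move=> AS cA S sSA cS; suff -> : S = A by [].
by apply/eqP; rewrite eqEfcard sSA cA cS leqnn.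
Qed.

Lemma inS_swap (D : {fset nat}) (c d y : nat) :
  #|` D| = n -> d \in D -> c \notin D -> y \notin D -> y != c ->
  inS n (c |` D) -> inS n (y |` (c |` (D `\ d))) -> inS n (y |` D).
Proof.
move=> cD dD cND yND yc cDS yDS.
have cap : (c |` D) `&` (y |` (c |` (D `\ d))) = c |` (D `\ d).
  apply/fsetP=> z; rewrite !inE.
  have [->|_] := eqVneq z y; first by rewrite (negbTE yND) (negbTE yc) andbF.
  by case: (z =P c) => //= _; case: (z \in D); rewrite ?andbT ?andbF.
have card_cap : #|` c |` (D `\ d)| = n.
  by rewrite cardfsU1 in_fsetD1 (negbTE cND) andbF -cD (cardfsD1 d D) dD.
have := inS_glue (a := c) cDS yDS; rewrite cap card_cap fset1U1 => /(_ erefl isT).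
suff -> : ((c |` D) `|` (y |` (c |` (D `\ d)))) `\ c = y |` D by apply.
apply/fsetP=> z; rewrite !inE.
case: (z =P c) => [->|_]; first by rewrite (negbTE cND) eq_sym (negbTE yc).
by case: (z \in D); rewrite /= ?andbF ?orbT ?orbF.
Qed.

Lemma inS_fset1U_exchange (W C D : {fset nat}) (y : nat) :
  saturated W -> C `<=` W -> #|` C| = n -> y \notin W -> inS n (y |` C) ->
  D `<=` W -> #|` D| = n -> inS n (y |` D).
Proof.
move=> satW sCW cC yNW yCS.
move: {2}#|` D `\` C| (erefl #|` D `\` C|) => k.
elim: k D => [|k IH] D cDC sDW cD.
  suff -> : D = C by [].
  apply/eqP; rewrite eqEfcard cD cC leqnn andbT -fsetD_eq0 -cardfs_eq0.
  by rewrite cDC.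
have /fset0Pn [d /fsetDP [dD dNC]] : D `\` C != fset0.
  by rewrite -cardfs_eq0 cDC.
have /fsubsetPn [c cInC cND] : ~~ (C `<=` D).
  apply: contraNN dNC => sCD; suff -> : C = D by [].
  by apply/eqP; rewrite eqEfcard sCD cC cD leqnn.
have yND : y \notin D by apply: contraNN yNW => /(fsubsetP sDW).
have yc : y != c by apply: contraNneq yNW => ->; apply: (fsubsetP sCW).
have sD'W : c |` (D `\ d) `<=` W.
  by rewrite fsubUset fsub1set (fsubsetP sCW) // (fsubset_trans (fsubD1set _ _)).
apply: (inS_swap cD dD cND yND yc).
  apply: satW; first by rewrite fsubUset fsub1set (fsubsetP sCW).
  by rewrite cardfsU1 cND cD.
apply: IH sD'W _.
  have -> : (c |` (D `\ d)) `\` C = (D `\` C) `\ d.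
    apply/fsetP=> z; rewrite !inE.
    by case: (z =P c) => [->|_]; rewrite ?cInC ?andbF //= andbCA.
  by move: cDC; rewrite (cardfsD1 d) in_fsetD dD dNC => -[].
by rewrite cardfsU1 in_fsetD1 (negbTE cND) andbF -cD (cardfsD1 d D) dD.
Qed.

Lemma saturated_fset1U (W C : {fset nat}) (y : nat) :
  saturated W -> C `<=` W -> #|` C| = n -> y \notin W -> inS n (y |` C) ->
  saturated (y |` W).
Proof.
move=> satW sCW cC yNW yCS S sSW cS.
have [yS|yNS] := boolP (y \in S); last first.
  apply: satW cS; apply/fsubsetP=> z zS.
  by case/fset1UP: (fsubsetP sSW z zS) => // zy; move: yNS; rewrite -zy zS.
rewrite -(fsetD1K yS); apply: (inS_fset1U_exchange satW sCW cC yNW yCS).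
  apply/fsubsetP=> z; rewrite in_fsetD1 => /andP [/negPf zy zS].
  by case/fset1UP: (fsubsetP sSW z zS) => // /eqP; rewrite zy.
by move: cS; rewrite (cardfsD1 y) yS => -[].
Qed.

Lemma saturated_fsetU (W W' C : {fset nat}) :
  saturated W -> saturated W' -> C `<=` W -> C `<=` W' -> #|` C| = n ->
  saturated (W `|` W').
Proof.
move=> satW satW' sCW sCW' cC.
move: {2}#|` W' `\` W| (erefl #|` W' `\` W|) => k.
elim: k W' satW' sCW' => [|k IH] W' satW' sCW' cW'W.
  suff /fsetUidPl -> : W' `<=` W by [].
  by rewrite -fsetD_eq0 -cardfs_eq0 cW'W.
have /fset0Pn [y /fsetDP [yW' yNW]] : W' `\` W != fset0.
  by rewrite -cardfs_eq0 cW'W.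
have yNC : y \notin C by apply: contraNN yNW => /(fsubsetP sCW).
have satUy : saturated (W `|` (W' `\ y)).
  apply: IH (saturated_sub (fsubD1set _ _) satW') _ _; first by rewrite fsubsetD1 sCW'.
  have -> : (W' `\ y) `\` W = (W' `\` W) `\ y by apply/fsetP=> z; rewrite !inE andbCA.
  by move: cW'W; rewrite (cardfsD1 y) in_fsetD yW' yNW => -[].
have -> : W `|` W' = y |` (W `|` (W' `\ y)).
  by rewrite fsetUCA fsetD1K.
apply: (saturated_fset1U satUy (fsubset_trans sCW (fsubsetUl _ _)) cC).
  by rewrite !inE negb_or yNW eqxx.
apply: satW'; first by rewrite fsubUset fsub1set yW' sCW'.
by rewrite cardfsU1 yNC cC.
Qed.

Lemma saturated_double (W : {fset nat}) :
  saturated W -> saturated [fset (2 * x)%N | x in W].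
Proof.
move=> satW S sSW cS.
have halfK z : z \in S -> (2 * z./2)%N = z.
  by move=> /(fsubsetP sSW) /imfsetP [w _ ->]; rewrite !mul2n doubleK.
have -> : S = [fset (2 * s)%N | s in [fset z./2 | z in S]].
  apply/fsetP=> z; apply/idP/imfsetP => [zS|[_ /imfsetP [x xS ->] ->]].
    by exists z./2; rewrite ?halfK //; apply/imfsetP; exists z.
  by rewrite halfK.
apply/inS_dbl/satW.
  apply/fsubsetP=> _ /imfsetP [z /(fsubsetP sSW) /imfsetP [w wW ->] ->].
  by rewrite mul2n doubleK.
rewrite card_in_imfset //= => x y xS yS eq_half.
by rewrite -(halfK x xS) -(halfK y yS) eq_half.
Qed.

End Saturation.

Definition nat_range (a l : nat) : {fset nat} := [fset (a + i)%N | i in iota 0 l].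

Lemma mem_nat_range (a l x : nat) : (x \in nat_range a l) = (a <= x < a + l)%N.
Proof.
apply/imfsetP/idP => [[i] |x_in]; first by rewrite mem_iota => i_lt ->; lia.
by exists (x - a)%N; [rewrite mem_iota|]; lia.
Qed.

Lemma card_nat_range (a l : nat) : #|` nat_range a l| = l.
Proof.
rewrite card_imfset /=; last exact: addnI.
by rewrite undup_id ?iota_uniq // size_iota.
Qed.

Lemma saturated_nat_range (n m : nat) :
  (m <= n - 2)%N -> saturated n (nat_range 0 (m + n.+1)).
Proof.
elim: m => [|m IH] m_le.
  by apply: saturated_inS; [apply: inS_base | rewrite card_nat_range].
have satI : saturated n (nat_range m.+1 n.+1).
  by apply: saturated_inS; [apply: inS_base | rewrite card_nat_range].
apply: saturated_sub (saturated_fsetU (IH (ltnW m_le)) satI _ _ (card_nat_range m.+1 n));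
  by apply/fsubsetP=> z; rewrite ?in_fsetU !mem_nat_range; lia.
Qed.

Definition pow2_scale (k : nat) (A : {fset nat}) : {fset nat} :=
  [fset (2 ^ k * x)%N | x in A].

Lemma saturated_pow2_scale (n k : nat) (A : {fset nat}) :
  saturated n A -> saturated n (pow2_scale k A).
Proof.
move=> satA; elim: k => [|k IH].
  by apply: saturated_sub satA; apply/fsubsetP=> _ /imfsetP [x xA ->]; rewrite mul1n.
apply: saturated_sub (saturated_double IH).
apply/fsubsetP=> _ /imfsetP [x xA ->]; apply/imfsetP; exists (2 ^ k * x)%N.
  by apply/imfsetP; exists x.
by rewrite expnS mulnA.
Qed.

(* [0, 2n-1): the union of the n-1 base intervals of rule (i). *)
Definition base_range (n : nat) : {fset nat} := nat_range 0 (n - 2 + n.+1).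

Lemma saturated_scaled_base_ranges (n k : nat) :
  exists2 W, saturated n W & forall j, (j <= k)%N -> pow2_scale j (base_range n) `<=` W.
Proof.
have satB j : saturated n (pow2_scale j (base_range n)).
  exact/saturated_pow2_scale/saturated_nat_range.
elim: k => [|k [W satW sBW]].
  exists (pow2_scale 0 (base_range n)) => [|j]; first exact: satB.
  by rewrite leqn0 => /eqP ->.
pose C := pow2_scale k.+1 (nat_range 0 n).
have sCW : C `<=` W.
  apply: fsubset_trans (sBW k (leqnn k)); apply/fsubsetP=> z /imfsetP [i].
  rewrite mem_nat_range => i_lt ->; apply/imfsetP; exists (2 * i)%N.
    by rewrite mem_nat_range; lia.
  by rewrite expnSr mulnA.
have sCB : C `<=` pow2_scale k.+1 (base_range n).
  apply/fsubsetP=> z /imfsetP [i]; rewrite mem_nat_range => i_lt ->.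
  by apply/imfsetP; exists i; rewrite ?mem_nat_range //; lia.
have cC : #|` C| = n.
  rewrite card_imfset ?card_nat_range //= => x y /eqP.
  by rewrite eqn_pmul2l ?expn_gt0 // => /eqP.
exists (W `|` pow2_scale k.+1 (base_range n)).
  exact: saturated_fsetU satW (satB _) sCW sCB cC.
move=> j; rewrite leq_eqVlt => /orP [/eqP -> | j_lt]; first exact: fsubsetUr.
exact: fsubset_trans (sBW j j_lt) (fsubsetUl _ _).
Qed.

Lemma powset_sub_scaled_base_ranges (n : nat) (W : {fset nat}) : (2 <= n)%N ->
  (forall j, (j <= n - 2)%N -> pow2_scale j (base_range n) `<=` W) ->
  powset n `<=` W.
Proof.
move=> n_ge2 sBW.
have mem_scaled j x : (j <= n - 2)%N -> (x <= 2)%N -> (2 ^ j * x)%N \in W.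
  move=> j_le x_le; apply: (fsubsetP (sBW j j_le)); apply/imfsetP.
  by exists x; rewrite ?mem_nat_range //; lia.
apply/fsubsetP=> z; rewrite in_fsetU inE => /orP [/eqP -> | /imfsetP [[|k] k_in ->]].
- by rewrite -(muln0 (2 ^ 0)) mem_scaled.
- by rewrite -(muln1 (2 ^ 0)) mem_scaled.
move: k_in; rewrite mem_iota => k_lt.
by rewrite expnSr mem_scaled //; lia.
Qed.

Lemma card_powset (n : nat) : #|` powset n| = n.+1.
Proof.
rewrite cardfsU1 card_imfset /=; last first.
  by move=> i j /eqP; rewrite eqn_exp2l // => /eqP.
rewrite undup_id ?iota_uniq // size_iota.
suff -> : 0 \notin [fset (2 ^ k)%N | k in iota 0 n] by [].
by apply/imfsetP => -[k _ /eqP]; rewrite eq_sym expn_eq0.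
Qed.

Theorem lemma4 (n : nat) (hn : (2 <= n)%N) : inS n (powset n).
Proof.
have [W satW sBW] := saturated_scaled_base_ranges n (n - 2).
exact: satW (powset_sub_scaled_base_ranges hn sBW) (card_powset n).
Qed.
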